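(* Let $n\ge2$ and $\mathbf{x}\in[0,1]^n$ with $0\le x_1\le\dots\le x_n\le1$ and $\sum_{i=1}^nx_i\le1$. Let $f:2^{[n]}\to\mathbb{R}_+$ be monotone submodular and suppose either (i) $f(\{n\})=\max_{i\in[n]}f(\{i\})$, or (ii) $f(\{i\})$ is the same constant for all $i\in[n]$. Then $f^{+}(\mathbf{x})/f^{++}(\mathbf{x})\le4/3$ (with the convention $0/0=1$).
   Context: $[n]=\{1,\dots,n\}$. A set function $f:2^{[n]}\to\mathbb{R}_+$ is monotone if $f(S)\le f(T)$ for $S\subseteq T$, submodular if $f(S)+f(T)\ge f(S\cap T)+f(S\cup T)$. For $\mathbf{x}\in[0,1]^n$: the concave closure $f^{+}(\mathbf{x})=\max\sum_{S\subseteq[n]}\theta(S)f(S)$ over $\theta:2^{[n]}\to\mathbb{R}_{\ge0}$ with $\sum_S\theta(S)=1$ and $\sum_{S\ni i}\theta(S)=x_i$ for all $i$; the upper pairwise independent extension $f^{++}(\mathbf{x})$ is the same maximum with the additional constraints $\sum_{S\ni i,j}\theta(S)=x_ix_j$ for all $i<j$. *)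

From HB Require Import structures.
From mathcomp Require Import all_boot all_order all_algebra.
From mathcomp Require Import boolp classical_sets reals.
Set Implicit Arguments. Unset Strict Implicit. Unset Printing Implicit Defensive.
Import Order.TTheory GRing.Theory Num.Theory.
Local Open Scope ring_scope.
Local Open Scope classical_set_scope.

Section Defs.
Variables (R : realType) (n : nat).

Definition monotone_setfun (f : {set 'I_n} -> R) : Prop :=
  forall S T : {set 'I_n}, S \subset T -> f S <= f T.

Definition submodular (f : {set 'I_n} -> R) : Prop :=
  forall S T : {set 'I_n}, f (S :&: T) + f (S :|: T) <= f S + f T.

Definition marginal_feasible (x : 'I_n -> R) (theta : {set 'I_n} -> R) : Prop :=
  (forall S, 0 <= theta S) /\
  \sum_(S : {set 'I_n}) theta S = 1 /\
  (forall i : 'I_n, \sum_(S : {set 'I_n} | i \in S) theta S = x i).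

Definition pairwise_feasible (x : 'I_n -> R) (theta : {set 'I_n} -> R) : Prop :=
  marginal_feasible x theta /\
  (forall i j : 'I_n, (i < j)%N ->
     \sum_(S : {set 'I_n} | (i \in S) && (j \in S)) theta S = x i * x j).

Definition concave_closure (f : {set 'I_n} -> R) (x : 'I_n -> R) : R :=
  sup [set v | exists theta, marginal_feasible x theta /\
                 v = \sum_(S : {set 'I_n}) theta S * f S].

Definition upper_pairwise_ext (f : {set 'I_n} -> R) (x : 'I_n -> R) : R :=
  sup [set v | exists theta, pairwise_feasible x theta /\
                 v = \sum_(S : {set 'I_n}) theta S * f S].

End Defs.

From HB Require Import structures.
From mathcomp Require Import all_boot all_order all_algebra.
From mathcomp Require Import boolp classical_sets reals.
From mathcomp Require Import ring lra.
(* Re-imported so that [set0], [subsetP], ... refer to finite sets again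
   rather than to the classical sets of [classical_sets]. *)
From mathcomp Require Import fintype finset.
Set Implicit Arguments.
Unset Strict Implicit.
Unset Printing Implicit Defensive.
Import Order.TTheory GRing.Theory Num.Theory.
Local Open Scope ring_scope.

(* Submodularity gives f(S) <= f(0) + sum_{i in S}
   (f{i} - f(0)); averaging over any distribution with marginals x shows
   f^+(x) <= L(x) := f(0) + sum_i x_i (f{i} - f(0))   (the linear bound).

   Let l be an index with the largest x_l (and, by hypothesis,
   the largest f{l}).  The mixture
     x_l^2 * (independent coordinates with probabilities x_i / x_l)
     + (1 - x_l) * (a singleton {i} with probability x_i, else the empty set)
     + x_l (1 - x_l) * (the empty set)
   has marginals x_i and pair marginals x_i x_j, so it is feasible for
   f^{++}; by monotonicity its value is at least
     x_l^2 f{l} + (1 - x_l) L(x) + x_l (1 - x_l) f(0).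

   Writing L(x) = f(0) + x_l D + A with D = f{l} - f(0) and
   0 <= A <= D (1 - x_l), the ratio L(x) / (lower bound) is at most 4/3:
   this is the elementary inequality [four_thirds_ineq], whose equality case
   is x_l = 1/2. *)

(* The one-variable inequality behind the constant 4/3; the slack in the
   worst case t > 1/4 is D (1 - 2t)^2. *)
Lemma four_thirds_ineq (R : realFieldType) (F0 D t A : R) :
  0 <= F0 -> 0 <= D -> 0 <= t <= 1 -> 0 <= A <= D * (1 - t) ->
  F0 + t * D + A <=
  4%:R / 3%:R *
  (t ^+ 2 * (F0 + D) + (1 - t) * (F0 + t * D + A) + t * (1 - t) * F0).
Proof.
move=> F0_ge0 D_ge0 /andP[t_ge0 t_le1] /andP[A_ge0 A_le].
have -> : t ^+ 2 * (F0 + D) + (1 - t) * (F0 + t * D + A) + t * (1 - t) * F0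
    = F0 + t * D + (1 - t) * A by ring.
have key : 0 <= F0 + t * D + (1 - 4%:R * t) * A; last by lra.
have [small|large] := lerP (4%:R * t) 1.
  have : 0 <= (1 - 4%:R * t) * A by rewrite mulr_ge0 ?subr_ge0.
  have : 0 <= t * D by rewrite mulr_ge0.
  lra.
have A_bound : (1 - 4%:R * t) * (D * (1 - t)) <= (1 - 4%:R * t) * A.
  by rewrite ler_wnM2l // subr_le0 ltW.
have square : 0 <= D * (1 - 2%:R * t) ^+ 2 by rewrite mulr_ge0 ?sqr_ge0.
lra.
Qed.

Section SetFunctionBounds.
Variables (R : realType) (n : nat).
Implicit Types (f th : {set 'I_n} -> R) (x : 'I_n -> R) (S : {set 'I_n}).

Definition linear_bound f x := f set0 + \sum_i x i * (f [set i] - f set0).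

Lemma submodular_singleton_bound f : submodular f ->
  forall S, f S <= f set0 + \sum_(i in S) (f [set i] - f set0).
Proof.
move=> f_sub S; have [k] := ubnP #|S|; elim: k S => // k IH S.
have [->|[i iS]] := set_0Vmem S; first by rewrite big_set0 addr0.
rewrite ltnS (cardsD1 i S) iS (big_setD1 i iS) /= => card_lt.
have disj : (S :\ i) :&: [set i] = set0.
  by apply/setP => j; rewrite !inE; case: (j == i); rewrite ?andbF.
have := f_sub (S :\ i) [set i]; rewrite disj setUC setD1K //.
have := IH (S :\ i) card_lt; lra.
Qed.

Lemma expectation_le_linear_bound f x th : submodular f ->
  marginal_feasible x th -> \sum_S th S * f S <= linear_bound f x.
Proof.
move=> f_sub [th_ge0 [th_mass th_marg]].
have expand : \sum_S th S * (f set0 + \sum_(i in S) (f [set i] - f set0))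
    = linear_bound f x.
  under eq_bigr => S _ do rewrite mulrDr big_distrr big_mkcond /=.
  rewrite big_split /= -big_distrl /= th_mass mul1r exchange_big /=.
  congr (_ + _); apply: eq_bigr => i _.
  rewrite -th_marg big_distrl /= [RHS]big_mkcond /=.
  by apply: eq_bigr => S _; case: (i \in S).
rewrite -expand; apply: ler_sum => S _; apply: ler_wpM2l => //.
exact: submodular_singleton_bound.
Qed.

Lemma concave_closure_le_linear_bound f x : submodular f ->
  (exists th, marginal_feasible x th) ->
  concave_closure f x <= linear_bound f x.
Proof.
move=> f_sub [th th_feas]; apply: ge_sup.
  by exists (\sum_S th S * f S), th.
by move=> v [th' [th'_feas ->]]; exact: expectation_le_linear_bound.
Qed.

(* Since f^{++} is a supremum bounded above by L(x), every pairwise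
   independent distribution bounds it from below. *)
Lemma expectation_le_upper_pairwise_ext f x th : submodular f ->
  pairwise_feasible x th -> \sum_S th S * f S <= upper_pairwise_ext f x.
Proof.
move=> f_sub th_feas; apply: ub_le_sup; last by exists th.
exists (linear_bound f x) => v [th' [[th'_feas _] ->]].
exact: expectation_le_linear_bound.
Qed.

End SetFunctionBounds.

Section Distributions.
Variables (R : realType) (n : nat).
Implicit Types (g th : {set 'I_n} -> R) (x p : 'I_n -> R) (S Q : {set 'I_n}).

Lemma sum_cond_indicator (P : pred {set 'I_n}) th :
  \sum_(S | P S) th S = \sum_S th S * (P S)%:R.
Proof.
rewrite big_mkcond; apply: eq_bigr => S _.
by case: (P S); rewrite ?mulr1 ?mulr0.
Qed.

Lemma sum_point_indicator (T : finType) (a : T) (h : T -> R) :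
  \sum_(t : T) (t == a)%:R * h t = h a.
Proof.
rewrite (bigD1 a) //= eqxx mul1r big1 ?addr0 // => t /negbTE ->.
by rewrite mul0r.
Qed.

Definition product_dist p S := \prod_i (if i \in S then p i else 1 - p i).

Lemma product_dist_ge0 p : (forall i, 0 <= p i <= 1) ->
  forall S, 0 <= product_dist p S.
Proof.
move=> p01 S; apply: prodr_ge0 => i _; have /andP[p0 p1] := p01 i.
by case: (i \in S); rewrite ?subr_ge0.
Qed.

(* Under the product distribution, Q is contained in S with probability
   prod_{k in Q} p k; this gives its total mass, marginals and pair
   marginals. *)
Lemma product_dist_superset p Q :
  \sum_S product_dist p S * (Q \subset S)%:R = \prod_(k in Q) p k.
Proof.
transitivity (\sum_(S : {set 'I_n}) \prod_(k : 'I_n) (if k \in S then p k else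
    if k \in Q then 0 else 1 - p k)).
  apply: eq_bigr => S _; rewrite /product_dist.
  have [QS|] := boolP (Q \subset S).
    rewrite mulr1; apply: eq_bigr => k _.
    by case: (boolP (k \in S)) => // kS; rewrite (contraNF (subsetP QS k) kS).
  case/subsetPn => k kQ kS.
  by rewrite mulr0 (bigD1 k) //= (negbTE kS) kQ mul0r.
rewrite -bigA_distr [RHS]big_mkcond /=; apply: eq_bigr => k _.
by case: (k \in Q); rewrite ?addr0 // addrC subrK.
Qed.

Definition singleton_dist x S :=
  (S == set0)%:R * (1 - \sum_i x i) + \sum_i (S == [set i])%:R * x i.

Lemma singleton_dist_ge0 x : (forall i, 0 <= x i) -> \sum_i x i <= 1 ->
  forall S, 0 <= singleton_dist x S.
Proof.
move=> x_ge0 sum_le1 S; apply: addr_ge0.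
  by apply: mulr_ge0; rewrite ?ler0n ?subr_ge0.
by apply: sumr_ge0 => i _; apply: mulr_ge0.
Qed.

Lemma singleton_dist_expect x g :
  \sum_S singleton_dist x S * g S = linear_bound g x.
Proof.
rewrite /singleton_dist /linear_bound.
under eq_bigr => S _ do rewrite mulrDl big_distrl /= -mulrA.
rewrite big_split /= sum_point_indicator exchange_big /=.
under [X in _ + X = _]eq_bigr => i _ do
  under eq_bigr => S _ do rewrite -mulrA.
under [X in _ + X = _]eq_bigr => i _ do rewrite sum_point_indicator.
rewrite mulrBl mul1r big_distrl /= -addrA; congr (_ + _).
by rewrite addrC -sumrB; apply: eq_bigr => i _; rewrite mulrBr.
Qed.

End Distributions.

Section PairwiseMixture.
Variables (R : realType) (n : nat) (x : 'I_n -> R) (l : 'I_n).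
Hypotheses (x_ge0 : forall i, 0 <= x i) (x_le_max : forall i, x i <= x l).
Hypotheses (max_le1 : x l <= 1) (sum_le1 : \sum_i x i <= 1).

Definition ratio_to_max (i : 'I_n) : R := x i / x l.

Definition pairwise_mixture (S : {set 'I_n}) : R :=
  x l ^+ 2 * product_dist ratio_to_max S + (1 - x l) * singleton_dist x S
  + x l * (1 - x l) * (S == set0)%:R.

Lemma pairwise_mixture_expect (g : {set 'I_n} -> R) :
  \sum_S pairwise_mixture S * g S =
  x l ^+ 2 * (\sum_S product_dist ratio_to_max S * g S)
  + (1 - x l) * linear_bound g x + x l * (1 - x l) * g set0.
Proof.
rewrite -singleton_dist_expect -(sum_point_indicator (set0 : {set 'I_n}) g).
under eq_bigr => S _ do rewrite 2!mulrDl.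
rewrite !big_split /= !big_distrr /=.
by congr (_ + _ + _); apply: eq_bigr => S _; rewrite !mulrA.
Qed.

(* Valid also when x l = 0, since then every x i vanishes. *)
Lemma max_times_ratio i : x l * ratio_to_max i = x i.
Proof.
rewrite /ratio_to_max; have [xl0|xl_neq0] := eqVneq (x l) 0.
  by rewrite xl0 mul0r; apply/le_anti; rewrite x_ge0 -xl0 x_le_max.
by rewrite mulrC divfK.
Qed.

Lemma ratio_to_max_01 i : 0 <= ratio_to_max i <= 1.
Proof.
rewrite /ratio_to_max divr_ge0 //=; have [xl0|xl_neq0] := eqVneq (x l) 0.
  by rewrite xl0 invr0 mulr0.
have xl_gt0 : 0 < x l by rewrite lt_def xl_neq0 x_ge0.
by rewrite ler_pdivrMr // mul1r.
Qed.

(* The mixture has marginals x i and pair marginals x i * x j: the product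
   part contributes x l^2 (x i / x l)(x j / x l), the singleton part never
   contains two coordinates. *)
Lemma pairwise_mixture_feasible : pairwise_feasible x pairwise_mixture.
Proof.
have superset (Q : {set 'I_n}) : \sum_S pairwise_mixture S * (Q \subset S)%:R =
  x l ^+ 2 * \prod_(k in Q) ratio_to_max k
  + (1 - x l) * ((Q \subset set0)%:R
      + \sum_i x i * ((Q \subset [set i])%:R - (Q \subset set0)%:R))
  + x l * (1 - x l) * (Q \subset set0)%:R.
  by rewrite pairwise_mixture_expect product_dist_superset.
split; first split; [|split|].
- move=> S; rewrite !addr_ge0 ?mulr_ge0 ?sqr_ge0 ?subr_ge0 ?ler0n //.
  + exact/product_dist_ge0/ratio_to_max_01.
  + exact: singleton_dist_ge0.
- transitivity (\sum_S pairwise_mixture S * (set0 \subset S)%:R).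
    by apply: eq_bigr => S _; rewrite sub0set mulr1.
  rewrite superset big_set0 sub0set big1 /= => [|i _]; first by ring.
  by rewrite !sub0set subrr mulr0.
- move=> i; rewrite sum_cond_indicator.
  under eq_bigr => S _ do rewrite -sub1set.
  rewrite superset big_set1 sub1set in_set0 /=.
  under eq_bigr => k _ do rewrite sub1set inE subr0 eq_sym mulrC.
  rewrite sum_point_indicator expr2 -mulrA max_times_ratio; ring.
- move=> i j lt_ij; rewrite sum_cond_indicator.
  under eq_bigr => S _ do rewrite -!sub1set -subUset.
  have neq_ij : i != j by rewrite neq_ltn lt_ij.
  rewrite superset big_setU1 ?in_set1 //= big_set1 subUset !sub1set in_set0 /=.
  rewrite big1 => [|k _]; last first.
    rewrite subUset !sub1set !inE subr0.
    case: (eqVneq i k) => [<-|_] /=; last by rewrite mulr0.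
    by rewrite eq_sym (negbTE neq_ij) mulr0.
  by rewrite expr2 mulrACA !max_times_ratio; ring.
Qed.

(* By monotonicity, the product part is worth at least f{l}, since it
   contains l almost surely (when x l > 0). *)
Lemma pairwise_mixture_value (f : {set 'I_n} -> R) :
  monotone_setfun f -> (forall S, 0 <= f S) ->
  x l ^+ 2 * f [set l] + (1 - x l) * linear_bound f x + x l * (1 - x l) * f set0
  <= \sum_S pairwise_mixture S * f S.
Proof.
move=> f_mono f_ge0; rewrite pairwise_mixture_expect !lerD2r.
have contains_max : x l ^+ 2 * f [set l] = x l ^+ 2 *
    \sum_S product_dist ratio_to_max S * (([set l] \subset S)%:R * f [set l]).
  under eq_bigr => S _ do rewrite mulrA.
  by rewrite -big_distrl /= product_dist_superset big_set1 [RHS]mulrA expr2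
    -[in RHS](mulrA (x l)) max_times_ratio.
rewrite contains_max ler_wpM2l ?sqr_ge0 //; apply: ler_sum => S _.
rewrite ler_wpM2l //; first exact/product_dist_ge0/ratio_to_max_01.
have [lS|] := boolP ([set l] \subset S); last by rewrite mul0r.
by rewrite mul1r f_mono.
Qed.

Lemma linear_bound_le_four_thirds (f : {set 'I_n} -> R) :
  monotone_setfun f -> (forall S, 0 <= f S) ->
  (forall i, f [set i] <= f [set l]) ->
  linear_bound f x <= 4%:R / 3%:R *
  (x l ^+ 2 * f [set l] + (1 - x l) * linear_bound f x
   + x l * (1 - x l) * f set0).
Proof.
move=> f_mono f_ge0 f_le_max.
pose gain i := f [set i] - f set0.
pose rest := \sum_(i | i != l) x i * gain i.
have gain_ge0 i : 0 <= gain i by rewrite subr_ge0 f_mono ?sub0set.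
have split_max : linear_bound f x = f set0 + x l * gain l + rest.
  by rewrite /linear_bound (bigD1 l) //= addrA.
have rest_le : rest <= gain l * (1 - x l).
  apply: le_trans (_ : \sum_(i | i != l) x i * gain l <= _).
    by apply: ler_sum => i _; rewrite ler_wpM2l // lerD2r.
  rewrite -big_distrl /= mulrC ler_wpM2l // lerBrDl.
  by move: sum_le1; rewrite (bigD1 l).
have -> : f [set l] = f set0 + gain l by rewrite /gain addrC subrK.
rewrite split_max; apply: four_thirds_ineq => //.
  by rewrite x_ge0 max_le1.
by rewrite sumr_ge0 => [|i _]; rewrite ?mulr_ge0.
Qed.

End PairwiseMixture.

Theorem mainTheorem12 (R : realType) (n : nat) (f : {set 'I_n} -> R)
  (x : 'I_n -> R) :
  (2 <= n)%N ->
  (forall i, 0 <= x i) -> (forall i, x i <= 1) ->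
  (forall i j : 'I_n, (i <= j)%N -> x i <= x j) ->
  \sum_(i : 'I_n) x i <= 1 ->
  (forall S, 0 <= f S) ->
  monotone_setfun f -> submodular f ->
  ((forall last : 'I_n, val last = n.-1 ->
      forall i : 'I_n, f [set i] <= f [set last])
   \/ (exists c : R, forall i : 'I_n, f [set i] = c)) ->
  concave_closure f x <= 4%:R / 3%:R * upper_pairwise_ext f x.
Proof.
move=> n_ge2 x_ge0 x_le1 x_mono sum_le1 f_ge0 f_mono f_sub singleton_max.
have last_lt : (n.-1 < n)%N by rewrite prednK // (leq_trans _ n_ge2).
pose l := Ordinal last_lt.
have f_le_last i : f [set i] <= f [set l].
  by case: singleton_max => [max_last | [c const]]; rewrite ?max_last ?const.
have x_le_last i : x i <= x l.
  by apply: x_mono; rewrite /= -ltnS prednK // (leq_trans _ n_ge2).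
have feas := pairwise_mixture_feasible x_ge0 x_le_last (x_le1 l) sum_le1.
have upper := concave_closure_le_linear_bound f_sub (ex_intro _ _ feas.1).
have gap :=
  linear_bound_le_four_thirds x_ge0 (x_le1 l) sum_le1 f_mono f_ge0 f_le_last.
have lower := pairwise_mixture_value x_ge0 x_le_last f_mono f_ge0.
have mixture_le := expectation_le_upper_pairwise_ext f_sub feas.
apply: (le_trans upper); apply: (le_trans gap).
by rewrite ler_wpM2l ?divr_ge0 ?ler0n //; apply: le_trans lower mixture_le.
Qed.
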